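(* Let $G$ be a maximal $3$-$\gamma_{c}$-vertex critical graph of order $n$ with clique number $\omega$. Then $\omega\leq n-3$, and equality holds if and only if $G$ is the cycle $C_{5}$.
   Context: All graphs are finite, simple and connected. A set $D\subseteq V(G)$ is a connected dominating set of $G$ if every vertex of $G$ is in $D$ or adjacent to a vertex of $D$, and $G[D]$ is connected; $\gamma_{c}(G)$ is the minimum cardinality of such a set. $G$ is $k$-$\gamma_{c}$-edge critical if $\gamma_{c}(G)=k$ and $\gamma_{c}(G+uv)<k$ for every pair of non-adjacent vertices $u,v$. A $2$-connected graph $G$ is $k$-$\gamma_{c}$-vertex critical if $\gamma_{c}(G)=k$ and $\gamma_{c}(G-v)<k$ for every $v\in V(G)$. $G$ is maximal $k$-$\gamma_{c}$-vertex critical if it is both $k$-$\gamma_{c}$-edge critical and $k$-$\gamma_{c}$-vertex critical. *)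

From mathcomp Require Import all_boot.
Set Implicit Arguments. Unset Strict Implicit. Unset Printing Implicit Defensive.

Section Graphs.
Variable T : finType.

Definition simple_graph (e : rel T) : Prop := symmetric e /\ irreflexive e.

Definition induced (e : rel T) (S : {set T}) : rel T :=
  [rel x y | [&& e x y, x \in S & y \in S]].

Definition connected_in (e : rel T) (S : {set T}) : bool :=
  (S != set0) && [forall x in S, forall y in S, connect (induced e S) x y].

Definition connected_graph (e : rel T) : bool := connected_in e setT.

Definition two_connected (e : rel T) : bool :=
  [&& 2 < #|T|, connected_graph e & [forall v, connected_in e (setT :\ v)]].

Definition is_cds (e : rel T) (S D : {set T}) : bool :=
  [&& D \subset S,
      [forall x in S, (x \in D) || [exists y in D, e x y]] &
      connected_in e D].

(* connected domination number of G[S]; equals #|T|.+1 ("infinity") if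
   G[S] has no connected dominating set *)
Definition gamma_c (e : rel T) (S : {set T}) : nat :=
  \big[minn/#|T|.+1]_(D : {set T} | is_cds e S D) #|D|.

Definition gamma_c_G (e : rel T) : nat := gamma_c e setT.

Definition add_edge (e : rel T) (u v : T) : rel T :=
  [rel x y | [|| e x y, (x == u) && (y == v) | (x == v) && (y == u)]].

Definition edge_critical (k : nat) (e : rel T) : Prop :=
  gamma_c_G e = k /\
  forall u v : T, u != v -> ~~ e u v -> gamma_c_G (add_edge e u v) < k.

(* G - v is the induced subgraph on V \ {v} *)
Definition vertex_critical (k : nat) (e : rel T) : Prop :=
  two_connected e /\ gamma_c_G e = k /\
  forall v : T, gamma_c e (setT :\ v) < k.

Definition maximal_vertex_critical (k : nat) (e : rel T) : Prop :=
  edge_critical k e /\ vertex_critical k e.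

Definition is_clique (e : rel T) (A : {set T}) : bool :=
  [forall x in A, forall y in A, (x != y) ==> e x y].

Definition clique_number (e : rel T) : nat :=
  \max_(A : {set T} | is_clique e A) #|A|.

End Graphs.

Definition C5_rel : rel 'I_5 :=
  fun i j : 'I_5 => ((i.+1 %% 5) == j :> nat) || ((j.+1 %% 5) == i :> nat).

Definition is_C5 (T : finType) (e : rel T) : Prop :=
  exists f : T -> 'I_5, bijective f /\ forall x y, e x y = C5_rel (f x) (f y).

(* Since gamma_c(G) = 3, no vertex and no edge dominates G; since
   gamma_c(G - v) <= 2, every vertex v has an edge ab dominating G - v with v
   adjacent to neither a nor b.  For v in a clique K this edge lies outside K,
   and every other vertex of K is dominated by it, hence has a neighbour outside
   K; applied to two vertices of K this exhibits three vertices outside K.  If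
   there are exactly three, each v in K is adjacent outside K at most to the
   vertex r_v missed by its edge, and v |-> r_v is injective.  For |K| >= 3 the
   three outside vertices would form a triangle, and a triangle outside K plus
   an edge v r_v would dominate G; so |K| = 2, r_v r_v' is a non-edge for the
   same reason, and G is the 5-cycle v v' r_v' s r_v. *)

From HB Require Import structures.
From mathcomp Require Import all_boot zify.
Set Implicit Arguments. Unset Strict Implicit. Unset Printing Implicit Defensive.

(* Lets [bigD1] split the minimum defining [gamma_c]. *)
HB.instance Definition _ := SemiGroup.isComLaw.Build nat minn minnA minnC.

Lemma connect_first_step (T : finType) (r : rel T) x y :
  connect r x y -> x != y -> exists z, r x z.
Proof.
case/connectP => [[|z p]] /= => [_ -> | /andP [rxz _] _ _]; first by rewrite eqxx.
by exists z.
Qed.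

Lemma cards3 (T : finType) (a b c : T) :
  a != b -> a != c -> b != c -> #|[set a; b; c]| = 3.
Proof. by move=> ab ac bc; rewrite -setUA cardsU1 cards2 !inE negb_or ab ac bc. Qed.

Lemma set3_of_card (T : finType) (A : {set T}) (a b c : T) :
  #|A| = 3 -> a \in A -> b \in A -> c \in A -> a != b -> a != c -> b != c ->
  A = [set a; b; c].
Proof.
move=> A3 aA bA cA ab ac bc; apply/esym/eqP; rewrite eqEcard cards3 // A3 leqnn.
by rewrite andbT; apply/subsetP => x; rewrite !inE => /orP [/orP [] | ] /eqP ->.
Qed.

Lemma exists_third (T : finType) (A : {set T}) (a b : T) :
  2 < #|A| -> exists2 c, c \in A & (c != a) && (c != b).
Proof.
move=> A3; have : 0 < #|A :\: [set a; b]|.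
  by rewrite cardsD; have := subset_leq_card (subsetIr A [set a; b]); rewrite cards2; lia.
by case/card_gt0P => c; rewrite !inE negb_or => /andP [? ?]; exists c.
Qed.

Section ConnectedDomination.
Variables (T : finType) (e : rel T).

Lemma gamma_c_le (S D : {set T}) : is_cds e S D -> gamma_c e S <= #|D|.
Proof. by move=> cdsD; rewrite /gamma_c (bigD1 D) //= geq_minl. Qed.

Lemma gamma_c_ge (S : {set T}) k :
  k <= #|T|.+1 -> (forall D, is_cds e S D -> k <= #|D|) -> k <= gamma_c e S.
Proof. by move=> kT kD; apply: (big_ind (fun n => k <= n)) => // m n; rewrite leq_min => ->. Qed.

Definition dominated_by (a b x : T) : bool := [|| x == a, x == b, e x a | e x b].

Lemma dominated_by_diag (a x : T) : dominated_by a a x = (x == a) || e x a.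
Proof. by rewrite /dominated_by; case: (x == a); case: (e x a). Qed.

Definition connected_dominating_pair (S : {set T}) (a b : T) : Prop :=
  [/\ a \in S, b \in S, a = b \/ e a b & {in S, forall x, dominated_by a b x}].

Hypotheses (e_sym : symmetric e) (e_irr : irreflexive e).

Lemma is_cds_set2P (S : {set T}) (a b : T) :
  is_cds e S [set a; b] <-> connected_dominating_pair S a b.
Proof.
split.
  case/and3P => /subsetP sub /forall_inP dom /andP [_ /forall_inP conn].
  split; [by rewrite sub ?set21 | by rewrite sub ?set22 | |].
    case: (a =P b) => [|/eqP ab]; [by left | right].
    have /forall_inP /(_ b (set22 a b)) := conn a (set21 a b).
    case/connect_first_step/(_ ab) => z /and3P [eaz _].
    rewrite !inE => /orP [] /eqP zE; last by rewrite -zE.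
    by rewrite zE e_irr in eaz.
  move=> x /dom /orP [|/exists_inP [y]]; rewrite /dominated_by !inE.
    by case/orP => ->; rewrite ?orbT.
  by case/orP => /eqP -> ->; rewrite !orbT.
move=> [aS bS ab dom]; apply/and3P; split.
- by apply/subsetP => x; rewrite !inE => /orP [] /eqP ->.
- apply/forall_inP => x /dom /or4P [xa | xb | exa | exb].
  + by rewrite !inE xa.
  + by rewrite !inE xb orbT.
  + by apply/orP; right; apply/exists_inP; exists a; rewrite ?set21.
  + by apply/orP; right; apply/exists_inP; exists b; rewrite ?set22.
apply/andP; split; first by apply/set0Pn; exists a; rewrite set21.
apply/forall_inP => x xab; apply/forall_inP => y yab.
have step u w : u \in [set a; b] -> w \in [set a; b] -> u != w -> induced e [set a; b] u w.
  move=> uab wab uw; rewrite /induced /= uab wab !andbT.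
  move: uab wab uw; case: ab => [<- | eab]; rewrite !inE ?orbb.
    by move=> /eqP -> /eqP ->; rewrite eqxx.
  by case/orP=> /eqP -> /orP [] /eqP ->; rewrite ?eqxx // e_sym.
by case: (x =P y) => [-> | /eqP xy]; [exact: connect0 | exact/connect1/step].
Qed.

Lemma cds_card_le2 (S D : {set T}) :
  is_cds e S D -> #|D| <= 2 -> exists a b, connected_dominating_pair S a b.
Proof.
move=> cdsD D2; have [a [b Dab]] : exists a b, D = [set a; b].
  have : 0 < #|D| by case/and3P: cdsD => _ _ /andP [/set0Pn [x xD] _]; apply/card_gt0P; exists x.
  case: (ltngtP #|D| 1) => [| D1 _ | D1 _]; first by lia.
    have /cards2P [a [b [_ ->]]] : #|D| == 2 by lia.
    by exists a, b.
  by case/eqP/cards1P: D1 => a ->; exists a, a; rewrite setUid.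
by exists a, b; apply/is_cds_set2P; rewrite -Dab.
Qed.

Lemma gamma_c_le2P (S : {set T}) :
  1 < #|T| -> gamma_c e S <= 2 <-> exists a b, connected_dominating_pair S a b.
Proof.
move=> T2; split => [g2 | [a [b /is_cds_set2P cds]]]; last first.
  by apply: leq_trans (gamma_c_le cds) _; rewrite cards2; case: (a != b).
case: (boolP [exists D, is_cds e S D && (#|D| <= 2)]) => [/existsP [D /andP []] | small].
  exact: cds_card_le2.
suff : 3 <= gamma_c e S by rewrite leqNgt ltnS g2.
apply: gamma_c_ge => // D cdsD; rewrite ltnNge; apply: contraNN small => D2.
by apply/existsP; exists D; rewrite cdsD.
Qed.

Lemma neighbour_exists (v : T) : connected_graph e -> 1 < #|T| -> exists w, e v w.
Proof.
case/andP => _ /forall_inP conn /card_gt1P [x [y [_ _ xy]]].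
have [u uv] : exists u, v != u.
  by case: (v =P x) => [-> | /eqP vx]; [exists y | exists x].
have /forall_inP /(_ u (in_setT u)) := conn v (in_setT v).
by case/connect_first_step/(_ uv) => w /andP [evw _]; exists w.
Qed.

Definition avoiding_edge (v a b : T) : Prop :=
  [/\ e a b, ~~ e v a, ~~ e v b & forall x, x != v -> dominated_by a b x].

Lemma avoiding_edge_of_gamma_c_le2 (v : T) :
  connected_graph e -> 1 < #|T| ->
  (forall a b, ~ connected_dominating_pair setT a b) ->
  gamma_c e (setT :\ v) <= 2 -> exists a b, avoiding_edge v a b.
Proof.
move=> conn T2 no_pair /(gamma_c_le2P _ T2) [a [b [aS bS ab dom]]].
have {}dom x : x != v -> dominated_by a b x by move=> xv; apply: dom; rewrite !inE xv.
have dominates_v_or_pair (c : T) : e v c -> c = a \/ c = b -> False.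
  move=> evc cab; apply: (no_pair a b); split; rewrite ?inE //.
  move=> x _; case: (x =P v) => [-> | /eqP /dom //].
  by rewrite /dominated_by; case: cab => <-; rewrite evc !orbT.
have nva : ~~ e v a by apply/negP => /dominates_v_or_pair; apply; left.
have nvb : ~~ e v b by apply/negP => /dominates_v_or_pair; apply; right.
exists a, b; split=> //; case: ab => // ab; subst b.
have [w evw] := neighbour_exists v conn T2.
have wv : w != v by apply: contraTneq evw => ->; rewrite e_irr.
have ewa : e w a.
  have := dom w wv; rewrite dominated_by_diag.
  case/orP => [/eqP wa | //]; by rewrite -wa evw in nva.
exfalso; apply: (no_pair a w); split; rewrite ?inE //; first by right; rewrite e_sym.
move=> x _; case: (x =P v) => [-> | /eqP /dom]; first by rewrite /dominated_by evw !orbT.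
by rewrite dominated_by_diag /dominated_by => /orP [] ->; rewrite ?orbT.
Qed.

End ConnectedDomination.

Lemma C5_rel_inj (i j : 'I_5) : C5_rel i =1 C5_rel j -> i = j.
Proof.
move=> h; apply: val_inj.
have := (h (@Ordinal 5 0 isT), h (@Ordinal 5 1 isT), h (@Ordinal 5 2 isT),
         h (@Ordinal 5 3 isT), h (@Ordinal 5 4 isT)).
by case: i j {h} => [[|[|[|[|[|i]]]]] ?] [[|[|[|[|[|j]]]]] ?] //; rewrite /C5_rel /= => -[[[[]]]].
Qed.

Lemma is_C5_of_cycle (T : finType) (e : rel T) (x0 x1 x2 x3 x4 : T) :
  symmetric e -> irreflexive e -> #|T| = 5 ->
  e x0 x1 -> e x1 x2 -> e x2 x3 -> e x3 x4 -> e x0 x4 ->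
  ~~ e x0 x2 -> ~~ e x0 x3 -> ~~ e x1 x3 -> ~~ e x1 x4 -> ~~ e x2 x4 ->
  is_C5 e.
Proof.
move=> e_sym e_irr T5 e01 e12 e23 e34 e04 n02 n03 n13 n14 n24.
pose c (i : 'I_5) := nth x0 [:: x0; x1; x2; x3; x4] i.
have ec_le (i j : 'I_5) : i <= j -> e (c i) (c j) = C5_rel i j.
  case: i j => [[|[|[|[|[|i]]]]] ?] [[|[|[|[|[|j]]]]] ?] //= _;
  by rewrite /C5_rel /= ?e_irr ?e01 ?e12 ?e23 ?e34 ?e04 ?(negbTE n02) ?(negbTE n03)
    ?(negbTE n13) ?(negbTE n14) ?(negbTE n24).
have ec i j : e (c i) (c j) = C5_rel i j.
  case: (leqP i j) => [/ec_le // | /ltnW /ec_le].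
  by rewrite e_sym /C5_rel orbC.
have c_bij : bijective c.
  apply: inj_card_bij; last by rewrite T5 card_ord.
  by move=> i j cij; apply: C5_rel_inj => k; rewrite -!ec cij.
have [f cK fK] := c_bij.
by exists f; split=> [|x y]; [exact: (bij_can_bij c_bij cK) | rewrite -ec !fK].
Qed.

Lemma card_C5 (T : finType) (e : rel T) : is_C5 e -> #|T| = 5.
Proof. by case=> f [/bij_eq_card -> _]; rewrite card_ord. Qed.

Section Cliques.
Variables (T : finType) (e : rel T).

Lemma is_cliqueP (K : {set T}) :
  reflect {in K &, forall x y, x != y -> e x y} (is_clique e K).
Proof.
apply: (iffP forall_inP) => [cl x y xK yK | cl x xK].
  exact/implyP/(forall_inP (cl x xK)).
by apply/forall_inP => y yK; apply/implyP; apply: cl.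
Qed.

Lemma clique_card_le (K : {set T}) : is_clique e K -> #|K| <= clique_number e.
Proof. exact: (leq_bigmax_cond (F := fun A : {set T} => #|A|)). Qed.

Lemma clique_number_witness : exists2 K, is_clique e K & clique_number e = #|K|.
Proof.
have cliques_gt0 : 0 < #|is_clique e|.
  by apply/card_gt0P; exists set0; apply/is_cliqueP => x; rewrite inE.
have [K KC Kmax] := eq_bigmax_cond (fun A : {set T} => #|A|) cliques_gt0.
by exists K.
Qed.

Hypothesis e_sym : symmetric e.

Lemma is_clique_set2 (a b : T) : e a b -> is_clique e [set a; b].
Proof.
move=> eab; apply/is_cliqueP => x y; rewrite !inE.
by case/orP=> /eqP -> /orP [] /eqP ->; rewrite ?eqxx // e_sym.
Qed.

Lemma is_clique_set3 (a b c : T) : e a b -> e a c -> e b c -> is_clique e [set a; b; c].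
Proof.
move=> eab eac ebc; apply/is_cliqueP => x y; rewrite !inE.
by case/orP=> [/orP [] |] /eqP -> /orP [/orP [] |] /eqP ->; rewrite ?eqxx // e_sym.
Qed.

End Cliques.

Section CliqueComplement.
Variables (T : finType) (e : rel T).
Hypotheses (e_sym : symmetric e) (e_irr : irreflexive e).
Hypothesis no_cds_pair : forall a b, ~ connected_dominating_pair e setT a b.
Hypothesis avoiding_edge_at : forall v, exists a b, avoiding_edge e v a b.
Variable K : {set T}.
Hypothesis K_clique : is_clique e K.

Lemma avoiding_edge_outside (v a b : T) :
  v \in K -> avoiding_edge e v a b -> a \notin K /\ b \notin K.
Proof.
move=> vK [eab nva nvb _].
have out c : ~~ e v c -> c != v -> c \notin K.
  by move=> nvc cv; apply: contra nvc => cK; apply: (is_cliqueP _ _ K_clique); rewrite // eq_sym.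
split; apply: out => //.
  by apply: contraNneq nvb => av; rewrite -av.
by apply: contraNneq nva => bv; rewrite -bv e_sym.
Qed.

Lemma avoiding_edge_dominates_clique (v v' a b : T) :
  v \in K -> v' \in K -> v' != v -> avoiding_edge e v a b -> e v' a || e v' b.
Proof.
move=> vK v'K v'v avoid; have [aK bK] := avoiding_edge_outside vK avoid.
case: avoid => _ _ _ /(_ v' v'v) /or4P [/eqP v'a | /eqP v'b | -> | ->]; rewrite ?orbT //.
- by rewrite -v'a v'K in aK.
- by rewrite -v'b v'K in bK.
Qed.

Lemma compl_not_clique (v r : T) : v \in K -> r \notin K -> e v r -> ~~ is_clique e (~: K).
Proof.
move=> vK rK evr; apply/negP => R_clique; apply: (@no_cds_pair v r).
split; rewrite ?inE //; first by right.
move=> x _; rewrite /dominated_by; case: (boolP (x \in K)) => xK.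
  case: (x =P v) => [// | /eqP xv].
  by rewrite (is_cliqueP _ _ K_clique x v) ?orbT.
case: (x =P r) => [_ | /eqP xr]; first by rewrite /= orbT.
by rewrite (is_cliqueP _ _ R_clique x r) ?inE ?orbT.
Qed.

Lemma card_clique_compl : 1 < #|K| -> 2 < #|~: K|.
Proof.
case/card_gt1P => [v1 [v2 [v1K v2K v12]]].
have [a1 [b1 avoid1]] := avoiding_edge_at v1.
have [a [b avoid2]] := avoiding_edge_at v2.
have [a1K b1K] := avoiding_edge_outside v1K avoid1.
have [aK bK] := avoiding_edge_outside v2K avoid2.
case: (avoid2) => eab nv2a nv2b _.
have v21 : v2 != v1 by rewrite eq_sym.
have [c cK ev2c] : exists2 c, c \notin K & e v2 c.
  by case/orP: (avoiding_edge_dominates_clique v1K v2K v21 avoid1) => ?; [exists a1 | exists b1].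
have ab : a != b by apply: contraTneq eab => ->; rewrite e_irr.
have ac : a != c by apply: contraNneq nv2a => ->.
have bc : b != c by apply: contraNneq nv2b => ->.
rewrite -(cards3 ab ac bc); apply: subset_leq_card; apply/subsetP => x.
by rewrite !inE => /orP [/orP [] |] /eqP ->.
Qed.

(* When three vertices lie outside K: r is the outside vertex missed by the
   avoiding edge of v, i.e. that edge is ~: K :\ r. *)
Definition hub (v r : T) : Prop :=
  [/\ r \notin K, {in ~: K, forall w, e v w -> w = r}, is_clique e (~: K :\ r)
    & {in K, forall v', v' != v -> exists2 w, w \in ~: K :\ r & e v' w}].

Lemma hub_exists (v : T) : #|~: K| = 3 -> v \in K -> exists r, hub v r.
Proof.
move=> R3 vK; have [a [b avoid]] := avoiding_edge_at v.
have [aK bK] := avoiding_edge_outside vK avoid.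
case: (avoid) => eab nva nvb _.
have ab : a != b by apply: contraTneq eab => ->; rewrite e_irr.
have [r rK /andP [ra rb]] : exists2 r, r \in ~: K & (r != a) && (r != b).
  by apply: exists_third; rewrite R3.
have RE : ~: K = [set a; b; r].
  by apply: set3_of_card; rewrite // ?inE // eq_sym.
have RDr : ~: K :\ r = [set a; b] by rewrite RE setUC setU1K // !inE negb_or ra rb.
exists r; split; rewrite ?RDr -?in_setC //.
- move=> w; rewrite RE !inE => /orP [/orP [] |] /eqP -> evw //.
  + by rewrite evw in nva.
  + by rewrite evw in nvb.
- exact: is_clique_set2.
move=> v' v'K v'v.
by case/orP: (avoiding_edge_dominates_clique vK v'K v'v avoid) => ?;
  [exists a; rewrite ?set21 | exists b; rewrite ?set22].
Qed.

Lemma hub_adj (v v' r r' : T) :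
  hub v r -> hub v' r' -> v' \in K -> v' != v -> e v' r' /\ r' != r.
Proof.
move=> [_ _ _ dom] [_ only' _ _] v'K v'v.
have [w] := dom v' v'K v'v; rewrite !inE => /andP [wr wK] ev'w.
by rewrite -(only' w) ?inE.
Qed.

Lemma hub_edge (v r w w' : T) :
  hub v r -> w \notin K -> w' \notin K -> w != r -> w' != r -> w != w' -> e w w'.
Proof.
by move=> [_ _ cl _] wK w'K wr w'r; apply: (is_cliqueP _ _ cl); rewrite !inE ?wK ?w'K ?wr ?w'r.
Qed.

Lemma hub_nonadj (v r w : T) : hub v r -> w \notin K -> w != r -> ~~ e v w.
Proof. by move=> [_ only _ _] wK; apply: contraNN => /(only w); rewrite inE => ->. Qed.

Lemma compl3_card_clique_le2 : #|~: K| = 3 -> #|K| <= 2.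
Proof.
move=> R3; rewrite leqNgt; apply/negP => K3.
have [v1 [v2 [v1K v2K v12]]] := card_gt1P (ltnW K3).
have [v3 v3K /andP [v31 v32]] := exists_third v1 v2 K3.
have [r1 h1] := hub_exists R3 v1K.
have [r2 h2] := hub_exists R3 v2K.
have [r3 h3] := hub_exists R3 v3K.
have [ev1r1 r12] := hub_adj h2 h1 v1K v12.
have [_ r31] := hub_adj h1 h3 v3K v31.
have [_ r32] := hub_adj h2 h3 v3K v32.
case: (h1) (h2) (h3) => [r1K _ _ _] [r2K _ _ _] [r3K _ _ _].
have RE : ~: K = [set r1; r2; r3].
  by apply: set3_of_card; rewrite // ?inE // eq_sym.
move: (compl_not_clique v1K r1K ev1r1); rewrite RE is_clique_set3 //.
- by apply: (hub_edge h3); rewrite // eq_sym.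
- by apply: (hub_edge h2); rewrite // eq_sym.
- by apply: (hub_edge h1); rewrite // eq_sym.
Qed.

Lemma compl3_is_C5 : 1 < #|K| -> #|~: K| = 3 -> is_C5 e.
Proof.
move=> K2 R3; have T5 : #|T| = 5.
  by rewrite -(cardsC K) R3; have := compl3_card_clique_le2 R3; lia.
have [v1 [v2 [v1K v2K v12]]] := card_gt1P K2.
have v21 : v2 != v1 by rewrite eq_sym.
have [r1 h1] := hub_exists R3 v1K.
have [r2 h2] := hub_exists R3 v2K.
have [ev1r1 r12] := hub_adj h2 h1 v1K v12.
have [ev2r2 r21] := hub_adj h1 h2 v2K v21.
have [s sK /andP [sr1 sr2]] : exists2 s, s \in ~: K & (s != r1) && (s != r2).
  by apply: exists_third; rewrite R3.
rewrite inE in sK.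
case: (h1) (h2) => [r1K _ _ _] [r2K _ _ _].
have er1s : e r1 s by apply: (hub_edge h2); rewrite // eq_sym.
have er2s : e r2 s by apply: (hub_edge h1); rewrite // eq_sym.
have ner12 : ~~ e r1 r2.
  apply: contraNN (compl_not_clique v1K r1K ev1r1) => er12.
  have -> : ~: K = [set r1; r2; s] by apply: set3_of_card; rewrite // ?inE // eq_sym.
  exact: is_clique_set3.
apply: (@is_C5_of_cycle _ _ v1 v2 r2 s r1) => //.
- exact: (is_cliqueP _ _ K_clique).
- by rewrite e_sym.
- by apply: (hub_nonadj h1); rewrite ?r2K.
- by apply: (hub_nonadj h1); rewrite ?sK.
- by apply: (hub_nonadj h2); rewrite ?sK.
- by apply: (hub_nonadj h2); rewrite ?r1K.
- by rewrite e_sym.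
Qed.

End CliqueComplement.

Theorem corollary3p8 (T : finType) (e : rel T) :
  simple_graph e -> connected_graph e ->
  maximal_vertex_critical 3 e ->
  clique_number e <= #|T| - 3 /\ (clique_number e = #|T| - 3 <-> is_C5 e).
Proof.
move=> [e_sym e_irr] conn [_ [/and3P [T3 _ _] [gamma3 vcrit]]].
have T2 := ltnW T3.
have no_pair a b : ~ connected_dominating_pair e setT a b.
  move=> pair; suff : gamma_c_G e <= 2 by rewrite gamma3.
  by apply/(gamma_c_le2P e_sym e_irr _ T2); exists a, b.
have avoid v : exists a b, avoiding_edge e v a b.
  by apply: avoiding_edge_of_gamma_c_le2 => //; rewrite -ltnS vcrit.
have [K K_clique omega] := clique_number_witness e.
have /card_gt0P [v _] := ltnW T2.
have [w evw] := neighbour_exists v conn T2.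
have K2 : 1 < #|K|.
  rewrite -omega; apply: leq_trans (clique_card_le (is_clique_set2 e_sym evw)).
  by rewrite cards2 ltnS lt0b; apply: contraTneq evw => ->; rewrite e_irr.
have R3 := card_clique_compl e_sym e_irr avoid K_clique K2.
have cardT := cardsC K.
rewrite omega; split; first lia.
split => [R3eq | /card_C5 T5]; last by lia.
by apply: (compl3_is_C5 e_sym e_irr no_pair avoid K_clique K2); lia.
Qed.
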